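(* Let $m>1$, $\chi>0$, and let $p\ge2$ be an integer. The maximum $$\frac1{C_p}:=\max_{X\in\mathcal R^p}\frac{\sum_{1\le i\ne j\le p}|X_j-X_i|^{1-m}}{\sum_{i=1}^{p-1}(X_{i+1}-X_i)^{1-m}}$$ is attained and satisfies $\frac1{C_p}\le p$. Moreover, if $\alpha\ge0$, then $\mathcal F^p_{m,\alpha}$ is bounded below on $\mathcal R^p$ if and only if $\chi\le C_p$.
   Context: $\mathcal R^p=\{X\in\mathbb R^p: X_1<\dots<X_p,\ \sum_iX_i=0\}$. For $\alpha\in\mathbb R$, $\mathcal F^p_{m,\alpha}(X)=\frac1{m-1}\sum_{i=1}^{p-1}(X_{i+1}-X_i)^{1-m}-\frac{\chi}{m-1}\sum_{1\le i\ne j\le p}|X_i-X_j|^{1-m}+\alpha\frac{|X|^2}{2}$, with $|\cdot|$ the Euclidean norm. *)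

From HB Require Import structures.
From mathcomp Require Import all_boot all_order all_algebra.
From mathcomp Require Import reals exp.
Set Implicit Arguments. Unset Strict Implicit. Unset Printing Implicit Defensive.
Import Order.TTheory GRing.Theory Num.Theory.
Local Open Scope ring_scope.

Section Defs.
Variable R : realType.

(* The set R^p = { X : X_1 < ... < X_p, sum_i X_i = 0 } (0-based indices). *)
Definition in_Rp (p : nat) (X : p.-tuple R) : Prop :=
  (forall i : nat, (i.+1 < p)%N -> X`_i < X`_i.+1) /\
  \sum_(0 <= i < p) X`_i = 0.

Definition consec_sum (m : R) (p : nat) (X : p.-tuple R) : R :=
  \sum_(0 <= i < p.-1) (X`_i.+1 - X`_i) `^ (1 - m).

Definition pair_sum (m : R) (p : nat) (X : p.-tuple R) : R :=
  \sum_(0 <= i < p) \sum_(0 <= j < p | i != j) `|X`_i - X`_j| `^ (1 - m).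

Definition sqnorm (p : nat) (X : p.-tuple R) : R :=
  \sum_(0 <= i < p) X`_i ^+ 2.

(* The quotient whose maximum is 1/C_p *)
Definition cp_ratio (m : R) (p : nat) (X : p.-tuple R) : R :=
  pair_sum m X / consec_sum m X.

Definition Fp (chi m alpha : R) (p : nat) (X : p.-tuple R) : R :=
  (m - 1)^-1 * consec_sum m X - chi / (m - 1) * pair_sum m X
  + alpha * (sqnorm X / 2).
End Defs.

From HB Require Import structures.
From mathcomp Require Import all_boot all_order all_algebra.
From mathcomp Require Import all_classical all_reals all_analysis.
From mathcomp Require Import ring lra.
Import Order.TTheory GRing.Theory Num.Theory numFieldNormedType.Exports.
Local Open Scope ring_scope.

(* The ratio [pair_sum / consec_sum] is invariant under dilations and
   translations.  Adding a rightmost point adds to the numerator at most the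
   new [consec_sum] plus [p] times the last gap term, which gives the bound
   [p] by induction.  A maximizer exists by induction on [p]: appending a far
   point strictly increases the ratio, while a configuration with a huge gap
   splits into two clusters and has ratio at most the maximum for fewer
   points plus a small error; hence it suffices to maximize over
   configurations with normalized gaps in a compact box.  Finally the singular
   part of [Fp] is homogeneous of degree [1 - m]: it is nonnegative when
   [chi <= C_p], and otherwise dilating a maximizer towards the origin sends
   [Fp] to [-oo], the confinement term staying bounded. *)

Section PowR.
Context {R : realType}.

Lemma le0_ger_powR (a x y : R) : a <= 0 -> 0 < x -> x <= y -> y `^ a <= x `^ a.
Proof.
move=> a_le0 x_gt0 xy; have y_gt0 := lt_le_trans x_gt0 xy.
rewrite -(opprK a) (powRN y) (powRN x) lef_pV2 ?posrE ?powR_gt0 //.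
by apply: ge0_ler_powR; rewrite ?nnegrE ?oppr_ge0 // ltW.
Qed.

Lemma powRVK (a y : R) : a != 0 -> 0 <= y -> (y `^ a^-1) `^ a = y.
Proof. by move=> a_neq0 y_ge0; rewrite -powRrM mulVf // powRr1. Qed.

End PowR.

Section SortedNth.
Context {R : realType}.
Implicit Types s : seq R.

Lemma sorted_ltr_nth s i j : sorted <%R s -> (i < j)%N -> (j < size s)%N ->
  s`_i < s`_j.
Proof.
by move=> hs ij js; rewrite (lt_sorted_ltn_nth 0 hs) // inE (ltn_trans ij).
Qed.

Lemma sorted_ler_nth s i j : sorted <%R s -> (i <= j)%N -> (j < size s)%N ->
  s`_i <= s`_j.
Proof.
by move=> hs ij js; rewrite (lt_sorted_leq_nth 0 hs) // inE (leq_ltn_trans ij).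
Qed.

Lemma sorted_rconsW {s y} : sorted <%R (rcons s y) -> sorted <%R s.
Proof. by rewrite -cats1 => /cat_sorted2 []. Qed.

Lemma sorted_rcons s y : sorted <%R s -> last 0 s < y -> sorted <%R (rcons s y).
Proof. by case: s => [//|x s] /= hs sy; rewrite rcons_path hs. Qed.

End SortedNth.

Section PointsOfGaps.
Context {R : realType}.

Definition points_of_gaps {n} (v : 'rV[R]_n) : seq R :=
  mkseq (fun i => \sum_(l < n | (l < i)%N) v ord0 l) n.+1.

Lemma size_points_of_gaps {n} (v : 'rV[R]_n) : size (points_of_gaps v) = n.+1.
Proof. exact: size_mkseq. Qed.

Lemma points_of_gaps_gap {n} (v : 'rV[R]_n) (l : 'I_n) :
  (points_of_gaps v)`_l.+1 - (points_of_gaps v)`_l = v ord0 l.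
Proof.
rewrite !nth_mkseq ?ltnS ?(ltn_ord l) ?(ltnW (ltn_ord l)) // (bigD1 l) ?ltnSn //=.
rewrite (eq_bigl (fun j : 'I_n => (j < l)%N)) ?addrK // => j.
by rewrite ltnS ltn_neqAle andbC; congr (_ && _).
Qed.

Lemma sorted_points_of_gaps {n} {v : 'rV[R]_n} :
  (forall l, 0 < v ord0 l) -> sorted <%R (points_of_gaps v).
Proof.
move=> v_gt0; apply/(sortedP 0) => i; rewrite size_points_of_gaps ltnS => hi.
by rewrite -subr_gt0 (points_of_gaps_gap v (Ordinal hi)).
Qed.

Lemma continuous_sumr (T : topologicalType) (I : eqType) (r : seq I)
    (P : pred I) (F : I -> T -> R) (x : T) :
  (forall i, i \in r -> P i -> {for x, continuous (F i)}) ->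
  {for x, continuous (fun y => \sum_(i <- r | P i) F i y)}.
Proof.
move=> Fc; rewrite -fct_sumE big_seq_cond.
apply: (big_ind (fun f : T -> R => {for x, continuous f})).
- exact: cst_continuous.
- by move=> f g fc gc; apply: cvgD.
- by move=> i /andP[]; apply: Fc.
Qed.

Lemma continuous_powR_comp (T : topologicalType) (g : T -> R) (a : R) (x : T) :
  {for x, continuous g} -> 0 < g x -> {for x, continuous (fun y => g y `^ a)}.
Proof.
move=> gc gx_gt0; apply: (continuous_comp gc (g := fun z => z `^ a)).
apply: differentiable_continuous; apply/derivable1_diffP.
by apply: derivable_powR; rewrite in_itv /= andbT.
Qed.

Lemma continuous_points_nth {n} (v : 'rV[R]_n) i :
  {for v, continuous (fun w : 'rV[R]_n => (points_of_gaps w)`_i)}.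
Proof.
have [hi|hi] := ltnP i n.+1; last first.
  have -> : (fun w : 'rV[R]_n => (points_of_gaps w)`_i) = fun=> 0.
    by apply/funext => w; rewrite nth_default // size_points_of_gaps.
  exact: cst_continuous.
have -> : (fun w : 'rV[R]_n => (points_of_gaps w)`_i) =
    fun w => \sum_(l <- index_enum 'I_n | (l < i)%N) w ord0 l.
  by apply/funext => w; rewrite nth_mkseq.
by apply: continuous_sumr => l _ _; apply: coord_continuous.
Qed.

End PointsOfGaps.

Section GapRatio.
Context {R : realType} (m : R).
Hypothesis m_gt1 : 1 < m.
Implicit Types (s u : seq R) (x y : R).

Let powR_anti {x y} : 0 < x -> x <= y -> y `^ (1 - m) <= x `^ (1 - m).
Proof. by apply: le0_ger_powR; rewrite subr_le0 ltW. Qed.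

Definition consec_seq s :=
  \sum_(0 <= i < (size s).-1) (s`_i.+1 - s`_i) `^ (1 - m).

Definition pair_seq s :=
  \sum_(0 <= i < size s) \sum_(0 <= j < size s | i != j)
    `|s`_i - s`_j| `^ (1 - m).

Definition ratio_seq s := pair_seq s / consec_seq s.

Definition dist_sum y s := \sum_(x <- s) `|y - x| `^ (1 - m).

Lemma consec_seq_ge0 s : 0 <= consec_seq s.
Proof. by apply: sumr_ge0 => i _; apply: powR_ge0. Qed.

Lemma pair_seq_ge0 s : 0 <= pair_seq s.
Proof. by apply: sumr_ge0 => i _; apply: sumr_ge0 => j _; apply: powR_ge0. Qed.

Lemma consec_seq_short s : (size s <= 1)%N -> consec_seq s = 0.
Proof. by case: s => [|x []] // _; rewrite /consec_seq big_geq. Qed.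

Lemma pair_seq_short s : (size s <= 1)%N -> pair_seq s = 0.
Proof.
case: s => [|x []] // _; first by rewrite /pair_seq big_geq.
by rewrite /pair_seq big_nat1 big_mkcond big_nat1.
Qed.

Lemma consec_seq_gt0 {s} : sorted <%R s -> (2 <= size s)%N -> 0 < consec_seq s.
Proof.
move=> hs s2; rewrite /consec_seq -(subnKC s2) /= big_ltn //= ltr_wpDr //.
  by apply: sumr_ge0 => i _; apply: powR_ge0.
by rewrite powR_gt0 // subr_gt0 sorted_ltr_nth ?subnKC.
Qed.

Lemma pair_seq_gt0 {s} : sorted <%R s -> (2 <= size s)%N -> 0 < pair_seq s.
Proof.
move=> hs s2; have s01 : s`_0 < s`_1 by rewrite sorted_ltr_nth.
rewrite /pair_seq -(subnKC s2) big_ltn //= ltr_wpDr //.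
  by apply: sumr_ge0 => i _; apply: sumr_ge0 => j _; apply: powR_ge0.
rewrite big_mkcond big_ltn //= big_ltn //= add0r ltr_wpDr //.
  by apply: sumr_ge0 => j _; case: ifP => _; rewrite ?powR_ge0.
by rewrite powR_gt0 // normr_gt0 subr_eq0 lt_eqF.
Qed.

Lemma consec_seq_rcons s y : (0 < size s)%N ->
  consec_seq (rcons s y) = consec_seq s + (y - last 0 s) `^ (1 - m).
Proof.
move=> s_gt0; rewrite /consec_seq size_rcons /= -(prednK s_gt0).
rewrite big_nat_recr //= prednK // nth_rcons ltnn eqxx.
rewrite nth_rcons ltn_predL s_gt0 nth_last; congr (_ + _).
apply: eq_big_nat => i /andP[_ hi].
by rewrite !nth_rcons -ltn_predRL hi (ltn_trans hi) // ltn_predL.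
Qed.

Lemma pair_seq_rcons s y :
  pair_seq (rcons s y) = pair_seq s + 2 * dist_sum y s.
Proof.
rewrite /dist_sum (big_nth 0) /pair_seq size_rcons big_nat_recr //=.
set k := size s.
have nth_s i : (i < k)%N -> (rcons s y)`_i = s`_i.
  by move=> ik; rewrite nth_rcons ik.
have nth_y : (rcons s y)`_k = y by rewrite nth_rcons ltnn eqxx.
have -> : \sum_(0 <= j < k.+1 | k != j)
    `|(rcons s y)`_k - (rcons s y)`_j| `^ (1 - m) =
    \sum_(0 <= i < k) `|y - s`_i| `^ (1 - m).
  rewrite big_mkcond big_nat_recr //= eqxx addr0.
  by apply: eq_big_nat => j /andP[_ jk]; rewrite nth_y nth_s // eq_sym ltn_eqF.
have -> : \sum_(0 <= i < k) \sum_(0 <= j < k.+1 | i != j)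
    `|(rcons s y)`_i - (rcons s y)`_j| `^ (1 - m) =
    \sum_(0 <= i < k) (\sum_(0 <= j < k | i != j) `|s`_i - s`_j| `^ (1 - m)
      + `|y - s`_i| `^ (1 - m)).
  apply: eq_big_nat => i /andP[_ ik].
  rewrite big_mkcond big_nat_recr //= ltn_eqF // nth_y nth_s // distrC.
  rewrite [in RHS]big_mkcond; congr (_ + _).
  by apply: eq_big_nat => j /andP[_ jk]; rewrite !nth_s.
by rewrite big_split /= -addrA mulr2n mulrDl mul1r.
Qed.

Lemma dist_sum_rcons_le {s y} : sorted <%R (rcons s y) -> (0 < size s)%N ->
  2 * dist_sum y s <=
    consec_seq (rcons s y) + (size s)%:R * (y - last 0 s) `^ (1 - m).
Proof.
move=> hr s_gt0; set r := rcons s y; set k := size s.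
have sr : size r = k.+1 by rewrite size_rcons.
have r_s i : (i < k)%N -> r`_i = s`_i by move=> ik; rewrite nth_rcons ik.
have r_y : r`_k = y by rewrite nth_rcons ltnn eqxx.
have r_last : r`_k.-1 = last 0 s by rewrite r_s ?nth_last // ltn_predL.
rewrite /dist_sum (big_nth 0) /consec_seq sr /= -/k.
have -> : k%:R * (y - last 0 s) `^ (1 - m) =
    \sum_(0 <= i < k) (y - last 0 s) `^ (1 - m).
  by rewrite sumr_const_nat subn0 mulr_natl.
rewrite -big_split mulr_sumr; apply: ler_sum_nat => i /andP[_ ik].
rewrite -r_s // -r_y -r_last mulr2n mulrDl mul1r.
have r_ik : r`_i < r`_k by apply: sorted_ltr_nth; rewrite ?sr.
have ik1 : (i <= k.-1)%N by rewrite -ltnS prednK.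
rewrite gtr0_norm ?subr_gt0 //; apply: lerD; apply: powR_anti.
- by rewrite subr_gt0 sorted_ltr_nth ?sr.
- by rewrite lerD2r sorted_ler_nth ?sr.
- by rewrite subr_gt0 sorted_ltr_nth ?sr ?ltn_predL.
- by rewrite lerD2l lerN2 sorted_ler_nth // sr ltnS leq_pred.
Qed.

Lemma pair_seq_le_size {s} : sorted <%R s -> pair_seq s <= (size s)%:R * consec_seq s.
Proof.
elim/last_ind: s => [|s y IH] hr.
  by rewrite pair_seq_short ?consec_seq_short ?mulr0.
have [s0|s_gt0] := posnP (size s).
  by rewrite pair_seq_short ?size_rcons ?s0 // mulr_ge0 ?consec_seq_ge0.
have := dist_sum_rcons_le hr s_gt0; have := IH (sorted_rconsW hr).
rewrite pair_seq_rcons size_rcons -natr1 !consec_seq_rcons //.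
have := consec_seq_ge0 s; have := powR_ge0 (y - last 0 s) (1 - m).
by move=> *; nra.
Qed.

Lemma ratio_seq_le_size {s} : sorted <%R s -> (2 <= size s)%N ->
  ratio_seq s <= (size s)%:R.
Proof.
by move=> hs s2; rewrite ler_pdivrMr ?consec_seq_gt0 // pair_seq_le_size.
Qed.

Section Affine.
Context {l : R} {f : R -> R}.
Hypotheses (l_gt0 : 0 < l) (fB : forall x y, f x - f y = l * (x - y)).

Lemma sorted_map_affine {s} : sorted <%R s -> sorted <%R (map f s).
Proof.
by apply: homo_sorted => x y xy; rewrite -subr_gt0 fB mulr_gt0 // subr_gt0.
Qed.

Lemma consec_seq_map s : sorted <%R s ->
  consec_seq (map f s) = l `^ (1 - m) * consec_seq s.
Proof.
move=> hs; rewrite /consec_seq size_map mulr_sumr.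
apply: eq_big_nat => i /andP[_ hi]; rewrite ltn_predRL in hi.
rewrite !(nth_map 0) ?(ltnW hi) // fB powRM ?(ltW l_gt0) //.
by rewrite subr_ge0 ltW // sorted_ltr_nth.
Qed.

Lemma pair_seq_map s : pair_seq (map f s) = l `^ (1 - m) * pair_seq s.
Proof.
rewrite /pair_seq size_map mulr_sumr; apply: eq_big_nat => i /andP[_ hi].
rewrite mulr_sumr big_seq_cond [RHS]big_seq_cond; apply: eq_bigr => j.
rewrite mem_index_iota => /andP[/andP[_ hj] _].
by rewrite !(nth_map 0) // fB normrM gtr0_norm // powRM ?(ltW l_gt0).
Qed.

Lemma ratio_seq_map s : sorted <%R s -> ratio_seq (map f s) = ratio_seq s.
Proof.
move=> hs; rewrite /ratio_seq consec_seq_map // pair_seq_map invfM mulrACA.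
by rewrite mulfV ?mul1r // gt_eqF // powR_gt0.
Qed.

End Affine.

(* [y] is put so far that all its distances to [s] are within the factor [b]
   of the new last gap [t]; as [b ^ (1 - m) = 2/3], the numerator gains at
   least [4/3 * size s * t ^ (1 - m)] while the denominator gains
   [t ^ (1 - m)], which beats [pair_seq s <= size s * consec_seq s]. *)
Lemma ratio_seq_rcons_gt {s} : sorted <%R s -> (2 <= size s)%N ->
  exists y, sorted <%R (rcons s y) /\ ratio_seq s < ratio_seq (rcons s y).
Proof.
move=> hs s2; set k := size s in s2.
have k_gt0 : (0 < k)%N by apply: leq_trans s2.
have first_lt_last : s`_0 < last 0 s.
  by rewrite -nth_last sorted_ltr_nth ?ltn_predRL ?ltn_predL.
pose b := (3 / 2) `^ (m - 1)^-1.
have b_pow : b `^ (1 - m) = 2 / 3.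
  by rewrite -opprB powRN powRVK ?invf_div // subr_eq0 gt_eqF.
have b_gt0 : 0 < b by rewrite powR_gt0.
have b_gt1 : 1 < b.
  rewrite ltNge; apply/negP => b_le1.
  by have := powR_anti b_gt0 b_le1; rewrite b_pow powR1 /=; lra.
set t := (last 0 s - s`_0) / (b - 1).
have t_gt0 : 0 < t by rewrite divr_gt0 // subr_gt0.
have bt : (b - 1) * t = last 0 s - s`_0 by rewrite mulrC divfK // gt_eqF // subr_gt0.
set y := last 0 s + t.
have hr : sorted <%R (rcons s y) by rewrite sorted_rcons // ltrDl.
exists y; split => //.
have far : k%:R * (2 / 3 * t `^ (1 - m)) <= dist_sum y s.
  have -> : k%:R * (2 / 3 * t `^ (1 - m)) = \sum_(0 <= i < k) 2 / 3 * t `^ (1 - m).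
    by rewrite sumr_const_nat subn0 mulr_natl.
  rewrite /dist_sum [X in _ <= X](big_nth 0) -/k; apply: ler_sum_nat => i /andP[_ ik].
  have s0i : s`_0 <= s`_i by rewrite sorted_ler_nth.
  have si_last : s`_i <= last 0 s.
    by rewrite -nth_last sorted_ler_nth ?ltn_predL // -ltnS prednK.
  rewrite gtr0_norm; last by rewrite subr_gt0 /y; lra.
  rewrite -b_pow -powRM ?(ltW t_gt0) ?(ltW (lt_trans ltr01 b_gt1)) //.
  by apply: powR_anti; rewrite /y; lra.
have hP := pair_seq_le_size hs; have C_gt0 := consec_seq_gt0 hs s2.
rewrite /ratio_seq pair_seq_rcons consec_seq_rcons //.
have -> : y - last 0 s = t by rewrite addrC addKr.
have T_gt0 : 0 < t `^ (1 - m) by rewrite powR_gt0.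
have CT_gt0 : 0 < consec_seq s + t `^ (1 - m) by rewrite addr_gt0.
rewrite ltr_pdivrMr // mulrAC ltr_pdivlMr //.
have := ler_wpM2r (ltW C_gt0) far; have := ler_wpM2r (ltW T_gt0) hP.
have : 0 < k%:R * t `^ (1 - m) * consec_seq s by rewrite !mulr_gt0 // ltr0n.
rewrite -/k; lra.
Qed.

Lemma ratio_seq_extend {u n} : sorted <%R u -> (2 <= size u)%N -> (size u <= n)%N ->
  exists v, [/\ sorted <%R v, size v = n & ratio_seq u <= ratio_seq v].
Proof.
move=> hu u2; elim: n => [/(leq_trans u2)//|n IH].
rewrite leq_eqVlt => /orP[/eqP <-|]; first by exists u.
rewrite ltnS => un; have [v [hv vn uv]] := IH un.
have [|y [hy vy]] := ratio_seq_rcons_gt hv; first by rewrite vn (leq_trans u2 un).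
by exists (rcons v y); rewrite size_rcons vn; split => //; apply: le_trans uv (ltW vy).
Qed.

Definition is_ratio_max k s := [/\ sorted <%R s, size s = k &
  forall u, sorted <%R u -> size u = k -> ratio_seq u <= ratio_seq s].

Lemma pair_seq_le_ratio_max {k s u} : is_ratio_max k s -> sorted <%R u ->
  (size u <= k)%N -> pair_seq u <= ratio_seq s * consec_seq u.
Proof.
move=> [_ sk smax] hu uk; have [u1|u2] := leqP (size u) 1.
  by rewrite pair_seq_short // consec_seq_short // mulr0.
have [v [hv vk uv]] := ratio_seq_extend hu u2 uk.
by rewrite -ler_pdivrMr ?consec_seq_gt0 //; apply: le_trans uv (smax v hv vk).
Qed.

Lemma dist_sum_le_const y s G : (forall x, x \in s -> `|y - x| `^ (1 - m) <= G) ->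
  dist_sum y s <= (size s)%:R * G.
Proof.
move=> hG; rewrite /dist_sum (big_nth 0) -[X in X%:R]subn0 mulr_natl.
by rewrite -sumr_const_nat; apply: ler_sum_nat => i /andP[_ hi]; apply/hG/mem_nth.
Qed.

Lemma pair_seq_cat_le {L r G} :
  (forall x z, x \in L -> z \in r -> `|x - z| `^ (1 - m) <= G) ->
  pair_seq (L ++ r) <= pair_seq L + pair_seq r + 2 * ((size L * size r)%:R * G).
Proof.
elim/last_ind: r => [|r y IH] hG.
  by rewrite cats0 (pair_seq_short [::]) // muln0 mul0r mulr0 !addr0.
rewrite -rcons_cat !pair_seq_rcons /dist_sum big_cat /= -!/(dist_sum y _).
have /IH : forall x z, x \in L -> z \in r -> `|x - z| `^ (1 - m) <= G.
  by move=> x z xL zr; rewrite hG // mem_rcons inE zr orbT.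
have : dist_sum y L <= (size L)%:R * G.
  by apply: dist_sum_le_const => x xL; rewrite distrC hG // mem_rcons mem_head.
by rewrite size_rcons mulnS natrD; lra.
Qed.

Lemma consec_seq_cat_ge L r : consec_seq L + consec_seq r <= consec_seq (L ++ r).
Proof.
case: L => [|x L]; first by rewrite (consec_seq_short [::]) // add0r.
elim/last_ind: r => [|r y IH].
  by rewrite cats0 (consec_seq_short [::]) // addr0.
rewrite -rcons_cat (consec_seq_rcons (_ ++ _)) //; case: r IH => [|z r] IH.
  by rewrite cats0 (consec_seq_short [:: y]) // addr0 lerDl powR_ge0.
by rewrite consec_seq_rcons // last_cat /= addrA lerD2r.
Qed.

Lemma pair_seq_le_of_gap {rho T s l} : 0 <= rho -> 0 < T -> sorted <%R s ->
  (forall u, sorted <%R u -> (size u < size s)%N ->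
     pair_seq u <= rho * consec_seq u) ->
  (l.+1 < size s)%N -> T <= s`_l.+1 - s`_l ->
  pair_seq s <= rho * consec_seq s + 2 * ((size s ^ 2)%:R * T `^ (1 - m)).
Proof.
move=> rho_ge0 T_gt0 hs hsmall hl hT.
set L := take l.+1 s; set r := drop l.+1 s.
have sL : size L = l.+1 by rewrite size_take hl.
have sr : size r = (size s - l.+1)%N by rewrite size_drop.
have cross x z : x \in L -> z \in r -> `|x - z| `^ (1 - m) <= T `^ (1 - m).
  move=> /(nthP 0)[i iL <-] /(nthP 0)[j jr <-].
  rewrite sL in iL; rewrite sr ltn_subRL in jr.
  rewrite nth_take // nth_drop.
  have h1 : s`_l.+1 <= s`_(l.+1 + j) by rewrite sorted_ler_nth ?leq_addr.
  have h2 : s`_i <= s`_l by rewrite sorted_ler_nth // ltnW.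
  rewrite distrC ger0_norm ?subr_ge0; last lra.
  by apply: (powR_anti T_gt0); lra.
have := pair_seq_cat_le cross; rewrite cat_take_drop => /le_trans; apply.
have hPL : pair_seq L <= rho * consec_seq L.
  by rewrite hsmall ?take_sorted ?sL.
have hPr : pair_seq r <= rho * consec_seq r.
  by rewrite hsmall ?drop_sorted // sr ltn_subrL (ltn_trans _ hl).
have := ler_wpM2l rho_ge0 (consec_seq_cat_ge L r); rewrite cat_take_drop.
have : ((size L * size r)%:R : R) <= (size s ^ 2)%:R.
  by rewrite ler_nat -mulnn leq_mul // ?sL ?sr ?leq_subr // ltnW.
move=> /(ler_wpM2r (powR_ge0 T (1 - m))); lra.
Qed.

Lemma continuous_consec_points {n} (v : 'rV[R]_n) : (forall l, 0 < v ord0 l) ->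
  {for v, continuous (fun w : 'rV[R]_n => consec_seq (points_of_gaps w))}.
Proof.
move=> v_gt0; have -> : (fun w : 'rV[R]_n => consec_seq (points_of_gaps w)) =
    fun w => \sum_(i <- index_iota 0 n)
      ((points_of_gaps w)`_i.+1 - (points_of_gaps w)`_i) `^ (1 - m).
  by apply/funext => w; rewrite /consec_seq size_points_of_gaps.
apply: continuous_sumr => i; rewrite mem_index_iota => /andP[_ hi] _.
apply: continuous_powR_comp; first by apply: continuousB; apply: continuous_points_nth.
by rewrite (points_of_gaps_gap v (Ordinal hi)).
Qed.

Lemma continuous_pair_points {n} (v : 'rV[R]_n) : (forall l, 0 < v ord0 l) ->
  {for v, continuous (fun w : 'rV[R]_n => pair_seq (points_of_gaps w))}.
Proof.
move=> v_gt0; have -> : (fun w : 'rV[R]_n => pair_seq (points_of_gaps w)) =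
    fun w => \sum_(i <- index_iota 0 n.+1) \sum_(j <- index_iota 0 n.+1 | i != j)
      `|(points_of_gaps w)`_i - (points_of_gaps w)`_j| `^ (1 - m).
  by apply/funext => w; rewrite /pair_seq size_points_of_gaps.
apply: continuous_sumr => i; rewrite mem_index_iota => /andP[_ hi] _.
apply: continuous_sumr => j; rewrite mem_index_iota => /andP[_ hj] ij.
apply: continuous_powR_comp.
  have h := continuousB (continuous_points_nth v i) (continuous_points_nth v j).
  exact: cvg_norm h.
have hv := sorted_points_of_gaps v_gt0.
rewrite normr_gt0 subr_eq0; case: ltngtP ij => // [ij|ji] _.
  by rewrite lt_eqF // sorted_ltr_nth ?size_points_of_gaps.
by rewrite gt_eqF // sorted_ltr_nth ?size_points_of_gaps.
Qed.

Lemma continuous_ratio_points {n} (v : 'rV[R]_n) : (0 < n)%N ->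
  (forall l, 0 < v ord0 l) ->
  {for v, continuous (fun w : 'rV[R]_n => ratio_seq (points_of_gaps w))}.
Proof.
move=> n_gt0 v_gt0; apply: continuousM; first exact: continuous_pair_points.
apply: continuousV; last exact: continuous_consec_points.
by rewrite gt_eqF // consec_seq_gt0 ?sorted_points_of_gaps ?size_points_of_gaps.
Qed.

(* Dividing by the smallest gap makes one gap equal to [1]. *)
Lemma normalize_gaps {k u} : (0 < k)%N -> sorted <%R u -> size u = k.+1 ->
  exists w : 'rV[R]_k, [/\ forall l, 1 <= w ord0 l,
    1 <= consec_seq (points_of_gaps w) &
    ratio_seq (points_of_gaps w) = ratio_seq u].
Proof.
move=> k_gt0 hu su; pose gap (l : 'I_k) := u`_l.+1 - u`_l.
have gap_gt0 l : 0 < gap l by rewrite subr_gt0 sorted_ltr_nth // su ltnS.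
have [l0 _ l0_min] := @arg_minP _ _ _ (Ordinal k_gt0) xpredT gap isT.
pose w := \row_(l < k) (gap l / gap l0).
have w_ge1 l : 1 <= w ord0 l by rewrite mxE ler_pdivlMr // mul1r l0_min.
have wE : points_of_gaps w = map (fun x => (x - u`_0) / gap l0) u.
  apply: (@eq_from_nth _ 0) => [|i]; rewrite size_points_of_gaps ?size_map ?su //.
  move=> hi; rewrite nth_mkseq // (nth_map 0) ?su //.
  rewrite (eq_bigr (fun l : 'I_k => gap l / gap l0)) => [|l _]; last by rewrite mxE.
  rewrite -mulr_suml -(big_ord_widen k (fun l => u`_l.+1 - u`_l)) //.
  by rewrite -(big_mkord xpredT (fun j => u`_j.+1 - u`_j)) telescope_sumr.
exists w; split => //.
  rewrite /consec_seq size_points_of_gaps /= big_mkord (bigD1 l0) //=.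
  rewrite points_of_gaps_gap mxE divff ?gt_eqF // powR1 lerDl.
  by apply: sumr_ge0 => i _; apply: powR_ge0.
have fB x y : (x - u`_0) / gap l0 - (y - u`_0) / gap l0 = (gap l0)^-1 * (x - y).
  by ring.
by rewrite wE (ratio_seq_map _ fB) // invr_gt0.
Qed.

Lemma ratio_points_max_on_box {k T} : (0 < k)%N -> 1 <= T ->
  exists2 c : 'rV[R]_k, (forall l, 1 <= c ord0 l <= T) &
    forall w : 'rV[R]_k, (forall l, 1 <= w ord0 l <= T) ->
      ratio_seq (points_of_gaps w) <= ratio_seq (points_of_gaps c).
Proof.
move=> k_gt0 T_ge1.
pose box := [set w : 'rV[R]_k | forall l, `[1, T]%classic (w ord0 l)]%classic.
have box_compact : compact box := rV_compact (fun=> @segment_compact R 1 T).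
have box0 : (box !=set0)%classic.
  by exists (const_mx 1) => l; rewrite /= mxE in_itv /= lexx T_ge1.
have [|c cbox cmax] := @compact_EVT_max _ _ (fun w => ratio_seq (points_of_gaps w))
    _ box0 box_compact.
  apply: continuous_in_subspaceT => w; rewrite inE => wbox.
  apply: continuous_ratio_points => // l.
  by have := wbox l; rewrite /= in_itv /= => /andP[/(lt_le_trans ltr01)].
exists c => [l|w wbox]; first by move: cbox; rewrite inE => /(_ l); rewrite /= in_itv.
by apply: cmax; rewrite inE => l; rewrite /= in_itv wbox.
Qed.

Lemma ratio_points_le_of_gap {k s T} {w : 'rV[R]_k} l : is_ratio_max k s ->
  0 < T -> (forall j, 1 <= w ord0 j) -> 1 <= consec_seq (points_of_gaps w) ->
  T <= w ord0 l ->
  ratio_seq (points_of_gaps w) <= ratio_seq s + 2 * ((k.+1 ^ 2)%:R * T `^ (1 - m)).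
Proof.
move=> smax T_gt0 w_ge1 C_ge1 Tw; have [hs _ _] := smax.
have rho_ge0 : 0 <= ratio_seq s by rewrite divr_ge0 ?pair_seq_ge0 ?consec_seq_ge0.
have hw := sorted_points_of_gaps (fun j => lt_le_trans ltr01 (w_ge1 j)).
have hsmall v : sorted <%R v -> (size v < size (points_of_gaps w))%N ->
    pair_seq v <= ratio_seq s * consec_seq v.
  by rewrite size_points_of_gaps ltnS; apply: pair_seq_le_ratio_max.
have hl : (l.+1 < size (points_of_gaps w))%N by rewrite size_points_of_gaps ltnS.
have hT : T <= (points_of_gaps w)`_l.+1 - (points_of_gaps w)`_l.
  by rewrite points_of_gaps_gap.
rewrite ler_pdivrMr ?(lt_le_trans ltr01) // mulrDl.
apply: le_trans (pair_seq_le_of_gap rho_ge0 T_gt0 hw hsmall hl hT) _.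
by rewrite size_points_of_gaps lerD2l ler_peMr // !mulr_ge0 ?powR_ge0.
Qed.

Lemma exists_large_powR_lt (B : R) {eps : R} : 0 < eps ->
  exists T, [/\ 1 <= T, B <= T & T `^ (1 - m) < eps].
Proof.
move=> eps_gt0; pose T0 := (eps / 2) `^ (1 - m)^-1.
have T0_gt0 : 0 < T0 by rewrite powR_gt0 // divr_gt0.
exists (Num.max (Num.max 1 B) T0); split; rewrite ?le_max ?lexx ?orbT //.
apply: le_lt_trans (powR_anti T0_gt0 _) _; first by rewrite le_max lexx orbT.
by rewrite powRVK ?divr_ge0 ?ltW // ?subr_eq0 ?lt_eqF //; lra.
Qed.

Lemma ratio_seq_size2 u : sorted <%R u -> size u = 2%N -> ratio_seq u = 2.
Proof.
case: u => [|x [|y []]] //= /andP[xy _] _.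
rewrite -[[:: x; y]]/(rcons [:: x] y) /ratio_seq pair_seq_rcons consec_seq_rcons //.
rewrite pair_seq_short // consec_seq_short // /dist_sum big_seq1 /= !add0r.
by rewrite gtr0_norm ?subr_gt0 // mulfK // gt_eqF // powR_gt0 // subr_gt0.
Qed.

(* A configuration of [k.+1] points with normalized gaps either has a gap
   [>= T], and then splits into two clusters of at most [k] points, or has
   all its gaps in the compact box [[1, T]^k].  For [T] large, configurations
   of the first kind lose against the one built by [ratio_seq_rcons_gt]. *)
Lemma exists_ratio_max_succ {k s} : (2 <= k)%N -> is_ratio_max k s ->
  exists s', is_ratio_max k.+1 s'.
Proof.
move=> k2 smax; have [hs sk _] := smax; have k_gt0 : (0 < k)%N := ltnW k2.
have [|y [hz z_gt]] := ratio_seq_rcons_gt hs; first by rewrite sk.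
have sz : size (rcons s y) = k.+1 by rewrite size_rcons sk.
have [wz [wz_ge1 _ wzE]] := normalize_gaps k_gt0 hz sz.
set delta := ratio_seq (rcons s y) - ratio_seq s.
set N : R := (k.+1 ^ 2)%:R.
have eps_gt0 : 0 < delta / (2 * N) by rewrite divr_gt0 ?mulr_gt0 ?ltr0n // subr_gt0.
have [T [T_ge1 sumT]] := exists_large_powR_lt (\sum_l wz ord0 l) eps_gt0.
rewrite ltr_pdivlMr ?mulr_gt0 ?ltr0n // => T_small.
have wzT l : wz ord0 l <= T.
  apply: le_trans sumT; rewrite (bigD1 l) //= lerDl.
  by apply: sumr_ge0 => i _; apply: le_trans (wz_ge1 i).
have [c cbox cmax] := ratio_points_max_on_box k_gt0 T_ge1.
exists (points_of_gaps c); split.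
- by apply: sorted_points_of_gaps => l; have /andP[/(lt_le_trans ltr01)] := cbox l.
- exact: size_points_of_gaps.
move=> u hu su; have [w [w_ge1 w_C <-]] := normalize_gaps k_gt0 hu su.
have [w_le|/existsP[l]] := boolP [forall l, w ord0 l <= T].
  by apply: cmax => l; rewrite w_ge1 (forallP w_le).
rewrite -ltNge => /ltW Tw; apply: le_trans (cmax wz _); last first.
  by move=> l'; rewrite wz_ge1 wzT.
have := ratio_points_le_of_gap l smax (lt_le_trans ltr01 T_ge1) w_ge1 w_C Tw.
rewrite /delta in T_small.
by rewrite wzE -/N; lra.
Qed.

Lemma exists_ratio_max {k} : (2 <= k)%N -> exists s, is_ratio_max k s.
Proof.
elim: k => // k IH; rewrite ltnS leq_eqVlt => /orP[/eqP <-|k2].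
  have h01 : sorted <%R [:: 0; 1 : R] by rewrite /= ltr01.
  by exists [:: 0; 1]; split => // u hu u2; rewrite !ratio_seq_size2.
by have [s smax] := IH k2; apply: exists_ratio_max_succ smax.
Qed.

End GapRatio.

Section Energy.
Context {R : realType} (m : R).
Hypothesis m_gt1 : 1 < m.
Context {p : nat}.
Implicit Types X : p.-tuple R.

Lemma consec_sumE X : consec_sum m X = consec_seq m X.
Proof. by rewrite /consec_sum /consec_seq size_tuple. Qed.

Lemma pair_sumE X : pair_sum m X = pair_seq m X.
Proof. by rewrite /pair_sum /pair_seq size_tuple. Qed.

Lemma cp_ratioE X : cp_ratio m X = ratio_seq m X.
Proof. by rewrite /cp_ratio consec_sumE pair_sumE. Qed.

Lemma in_RpP X : in_Rp X <-> sorted <%R X /\ \sum_(0 <= i < p) X`_i = 0.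
Proof.
rewrite /in_Rp; split=> -[hX ->]; split=> //.
  by apply/(sortedP 0) => i; rewrite size_tuple; apply: hX.
by move/(sortedP 0): hX => hX i ip; apply: hX; rewrite size_tuple.
Qed.

Lemma exists_in_Rp_ratio {s} : sorted <%R s -> size s = p ->
  exists X, in_Rp X /\ ratio_seq m X = ratio_seq m s.
Proof.
move=> hs sp; pose mu := (\sum_(0 <= i < p) s`_i) / p%:R.
have fB x y : x - mu - (y - mu) = 1 * (x - y) by ring.
have sz : size (map (fun x => x - mu) s) == p by rewrite size_map sp.
exists (Tuple sz); split; last exact: ratio_seq_map.
apply/in_RpP; split; first exact: sorted_map_affine.
rewrite (eq_big_nat _ _ (F2 := fun i => s`_i - mu)) => [|i /andP[_ ip]].
  rewrite sumrB sumr_const_nat subn0 -mulr_natr /mu.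
  have [->|p_gt0] := posnP p; first by rewrite big_geq // mul0r mulr0 subrr.
  by rewrite divfK ?subrr // pnatr_eq0 -lt0n.
by rewrite /= (nth_map 0) ?sp.
Qed.

Lemma Fp_ge0 {chi alpha rho X} : 0 <= chi -> 0 <= alpha -> chi * rho <= 1 ->
  pair_sum m X <= rho * consec_sum m X -> 0 <= Fp chi m alpha X.
Proof.
move=> chi_ge0 alpha_ge0 chi_rho hP.
have C_ge0 : 0 <= consec_sum m X by rewrite consec_sumE consec_seq_ge0.
rewrite /Fp addr_ge0 ?mulr_ge0 ?divr_ge0 ?sumr_ge0 // => [|i _]; last exact: sqr_ge0.
have -> : (m - 1)^-1 * consec_sum m X - chi / (m - 1) * pair_sum m X =
    (consec_sum m X - chi * pair_sum m X) / (m - 1) by ring.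
rewrite divr_ge0 ?subr_ge0 ?(ltW m_gt1) //.
apply: le_trans (ler_wpM2l chi_ge0 hP) _.
by rewrite mulrA -[leRHS]mul1r ler_wpM2r.
Qed.

Lemma Fp_scale chi alpha lam X : 0 < lam -> sorted <%R X ->
  Fp chi m alpha (map_tuple ( *%R lam) X) =
    lam `^ (1 - m) * ((consec_sum m X - chi * pair_sum m X) / (m - 1))
    + alpha * (lam ^+ 2 * (sqnorm X / 2)).
Proof.
move=> lam_gt0 hX; have lamB x y : lam * x - lam * y = lam * (x - y) by ring.
rewrite /Fp !consec_sumE !pair_sumE /= (consec_seq_map m lam_gt0 lamB) //.
rewrite (pair_seq_map m lam_gt0 lamB).
have -> : sqnorm (map_tuple ( *%R lam) X) = lam ^+ 2 * sqnorm X.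
  rewrite /sqnorm mulr_sumr; apply: eq_big_nat => i /andP[_ ip].
  by rewrite /= (nth_map 0) ?size_tuple // exprMn.
by ring.
Qed.

Lemma Fp_unbounded chi alpha X : in_Rp X ->
  consec_sum m X < chi * pair_sum m X ->
  forall M, exists2 Y : p.-tuple R, in_Rp Y & Fp chi m alpha Y < M.
Proof.
move=> /in_RpP[hX X0] CP M.
set K := (chi * pair_sum m X - consec_sum m X) / (m - 1).
have K_gt0 : 0 < K by rewrite divr_gt0 ?subr_gt0.
set S := sqnorm X; have S_ge0 : 0 <= S by apply: sumr_ge0 => i _; apply: sqr_ge0.
set w := 1 + (`|alpha| * (S / 2) + `|M|) / K.
have w_ge1 : 1 <= w.
  by rewrite lerDl divr_ge0 ?(ltW K_gt0) // addr_ge0 // mulr_ge0 // divr_ge0.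
pose lam := w `^ (1 - m)^-1.
have lam_gt0 : 0 < lam by rewrite powR_gt0 // (lt_le_trans ltr01).
have lam_le1 : lam <= 1.
  have := @le0_ger_powR _ (1 - m)^-1 1 w; rewrite powR1; apply => //.
  by rewrite invr_le0 subr_le0 ltW.
have lamB x y : lam * x - lam * y = lam * (x - y) by ring.
exists (map_tuple ( *%R lam) X).
  apply/in_RpP; split.
  exact: (sorted_map_affine (f := *%R lam) lam_gt0 lamB hX).
  rewrite -[RHS](mulr0 lam) -[in RHS]X0 mulr_sumr; apply: eq_big_nat => i /andP[_ ip].
  by rewrite /= (nth_map 0) ?size_tuple.
rewrite Fp_scale // powRVK ?subr_eq0 ?lt_eqF ?(le_trans ler01) //.
have -> : (consec_sum m X - chi * pair_sum m X) / (m - 1) = - K.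
  by rewrite /K; ring.
have : alpha * (lam ^+ 2 * (S / 2)) <= `|alpha| * (S / 2).
  apply: le_trans (ler_norm _) _; rewrite normrM ler_wpM2l //.
  rewrite ger0_norm; last by rewrite mulr_ge0 ?sqr_ge0 ?divr_ge0.
  by apply: ler_piMl; rewrite ?divr_ge0 ?exprn_ile1 // ltW.
have : w * K = K + (`|alpha| * (S / 2) + `|M|) by rewrite mulrDl mul1r divfK ?gt_eqF.
have := ler_norm (- M); rewrite normrN mulrN -/S; lra.
Qed.

Lemma consec_sum_gt0 {X} : (2 <= p)%N -> in_Rp X -> 0 < consec_sum m X.
Proof.
by move=> p2 /in_RpP[hX _]; rewrite consec_sumE consec_seq_gt0 ?size_tuple.
Qed.

Lemma cp_ratio_gt0 {X} : (2 <= p)%N -> in_Rp X -> 0 < cp_ratio m X.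
Proof.
move=> p2 /in_RpP[hX _].
by rewrite cp_ratioE divr_gt0 ?pair_seq_gt0 ?consec_seq_gt0 ?size_tuple.
Qed.

Lemma exists_cp_ratio_max : (2 <= p)%N -> exists2 X0 : p.-tuple R, in_Rp X0 &
  forall X, in_Rp X -> pair_sum m X <= cp_ratio m X0 * consec_sum m X.
Proof.
move=> p2; have [s smax] := exists_ratio_max m m_gt1 p2; have [hs sp _] := smax.
have [X0 [X0_Rp X0_ratio]] := exists_in_Rp_ratio hs sp.
exists X0 => // X /in_RpP[hX _].
rewrite pair_sumE consec_sumE cp_ratioE X0_ratio.
by apply: (pair_seq_le_ratio_max m m_gt1 smax hX); rewrite size_tuple.
Qed.

Lemma Fp_bounded_below_iff chi alpha X0 : (2 <= p)%N -> in_Rp X0 ->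
  0 < chi -> 0 <= alpha ->
  (forall X, in_Rp X -> pair_sum m X <= cp_ratio m X0 * consec_sum m X) ->
  (exists M, forall X, in_Rp X -> M <= Fp chi m alpha X) <->
  chi <= (cp_ratio m X0)^-1.
Proof.
move=> p2 X0_Rp chi_gt0 alpha_ge0 hmax.
rewrite -div1r ler_pdivlMr ?cp_ratio_gt0 //; split.
  move=> [M hM]; rewrite leNgt; apply/negP => chi_rho.
  have [|Y /hM + FY] := Fp_unbounded chi alpha X0 X0_Rp _ M; last by lra.
  have C0_gt0 := consec_sum_gt0 p2 X0_Rp.
  by move: chi_rho; rewrite /cp_ratio mulrA ltr_pdivlMr // mul1r.
move=> chi_rho; exists 0 => X /hmax.
exact: Fp_ge0 (ltW chi_gt0) alpha_ge0 chi_rho.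
Qed.

End Energy.

Theorem proposition2p3 (R : realType) (m chi : R) (p : nat) :
  1 < m -> 0 < chi -> (2 <= p)%N ->
  exists X0 : p.-tuple R,
    [/\ in_Rp X0,
        (forall X : p.-tuple R, in_Rp X -> cp_ratio m X <= cp_ratio m X0),
        cp_ratio m X0 <= p%:R &
        forall alpha : R, 0 <= alpha ->
          ((exists M : R, forall X : p.-tuple R, in_Rp X -> M <= Fp chi m alpha X)
           <-> chi <= (cp_ratio m X0)^-1)].
Proof.
move=> m_gt1 chi_gt0 p2.
have [X0 X0_Rp hmax] := exists_cp_ratio_max m m_gt1 p2.
exists X0; split => //.
- move=> X X_Rp; rewrite {1}/cp_ratio ler_pdivrMr ?hmax //.
  exact: consec_sum_gt0 p2 X_Rp.
- have /in_RpP[X0_sorted _] := X0_Rp.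
  by rewrite cp_ratioE -{2}(size_tuple X0) ratio_seq_le_size ?size_tuple.
- by move=> alpha alpha_ge0; apply: Fp_bounded_below_iff.
Qed.
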